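(* For every closed subset $C\subseteq A$ and every $m\in\omega$, every $g\in\mathcal{G}_m$ that fixes $C\cap A_m$ pointwise extends to a permutation $\pi\in\mathcal{G}$ that fixes $C$ pointwise.
   Context: Let $\langle P,\preccurlyeq,\preccurlyeq^\ast\rangle$ be a doubly ordered set: $\preccurlyeq$ a partial order on $P$, $\preccurlyeq^\ast$ a preorder on $P$, and $p\preccurlyeq q\Rightarrow p\preccurlyeq^\ast q$. Write $p\prec q$ for ($p\preccurlyeq q$ and $p\neq q$). For a quadruple $\langle x_0,x_1,x_2,x_3\rangle$ and $i<4$, $\mathrm{pr}_i(\langle x_0,x_1,x_2,x_3\rangle)=x_i$. For a set $S$, $\mathscr{S}(S)$ is the set of permutations of $S$. Define recursively $A_0=\{\langle0,p,\varnothing,k\rangle\mid p\in P,k\in\omega\}$ and $A_{n+1}=A_n\cup\{\langle n+1,q,a,0\rangle\mid q\in P,a\in A_n,\mathrm{pr}_1(a)\prec q\}\cup\{\langle n+1,q,a,k\rangle\mid q\in P,a\in A_n,\mathrm{pr}_1(a)\not\preccurlyeq q,\mathrm{pr}_1(a)\preccurlyeq^\ast q,k\in\omega\}$; let $A=\bigcup_{n}A_n$. Define $\mathcal{G}_0=\{f\in\mathscr{S}(A_0)\mid \mathrm{pr}_1(f(a))=\mathrm{pr}_1(a)\text{ for all }a\in A_0\}$; for $f\in\mathscr{S}(A_{n+1})$, $f\in\mathcal{G}_{n+1}$ iff $f{\upharpoonright}A_n\in\mathcal{G}_n$ and for all $b\in A_{n+1}\setminus A_n$, $\mathrm{pr}_1(f(b))=\mathrm{pr}_1(b)$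 and $\mathrm{pr}_2(f(b))=f(\mathrm{pr}_2(b))$. Let $\mathcal{G}=\{\pi\in\mathscr{S}(A)\mid \pi{\upharpoonright}A_n\in\mathcal{G}_n\text{ for all }n\}$. A subset $C\subseteq A$ is closed if (i) for all $n\in\omega$, all $a\in C\cap A_n$ and all $q\in P$ with $\mathrm{pr}_1(a)\prec q$, we have $\langle n+1,q,a,0\rangle\in C$, and (ii) for all $b\in C\setminus A_0$, $\mathrm{pr}_2(b)\in C$. *)

(* Elements of A are quadruples <n, p, a, k>; the third component is either
   the empty set (None) or an element of A (Some a). *)
Inductive node (P : Type) : Type :=
  | Node : nat -> P -> option (node P) -> nat -> node P.
Arguments Node {P} _ _ _ _.

Definition pr0 {P} (x : node P) : nat := match x with Node n _ _ _ => n end.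
Definition pr1 {P} (x : node P) : P := match x with Node _ p _ _ => p end.
Definition pr2 {P} (x : node P) : option (node P) :=
  match x with Node _ _ a _ => a end.
Definition pr3 {P} (x : node P) : nat := match x with Node _ _ _ k => k end.

Definition strict {P} (le : P -> P -> Prop) (p q : P) : Prop := le p q /\ p <> q.

Fixpoint An {P} (le les : P -> P -> Prop) (n : nat) : node P -> Prop :=
  match n with
  | 0 => fun x => exists p k, x = Node 0 p None k
  | S n' => fun x =>
      An le les n' x
      \/ (exists q a, An le les n' a /\ strict le (pr1 a) q /\
                      x = Node (S n') q (Some a) 0)
      \/ (exists q a k, An le les n' a /\ ~ le (pr1 a) q /\ les (pr1 a) q /\
                        x = Node (S n') q (Some a) k)
  end.

Definition Aall {P} (le les : P -> P -> Prop) (x : node P) : Prop :=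
  exists n, An le les n x.

Definition perm_on {T} (S : T -> Prop) (f : T -> T) : Prop :=
  (forall x, S x -> S (f x)) /\
  (forall x y, S x -> S y -> f x = f y -> x = y) /\
  (forall y, S y -> exists x, S x /\ f x = y).

(* G_n f : the restriction of f to A_n belongs to the group G_n *)
Fixpoint Gn {P} (le les : P -> P -> Prop) (n : nat) (f : node P -> node P) : Prop :=
  match n with
  | 0 => perm_on (An le les 0) f /\
         (forall a, An le les 0 a -> pr1 (f a) = pr1 a)
  | S n' => perm_on (An le les (S n')) f /\ Gn le les n' f /\
         (forall b, An le les (S n') b -> ~ An le les n' b ->
            pr1 (f b) = pr1 b /\ pr2 (f b) = option_map f (pr2 b))
  end.

Definition Gall {P} (le les : P -> P -> Prop) (pi : node P -> node P) : Prop :=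
  perm_on (Aall le les) pi /\ forall n, Gn le les n pi.

Definition closed_set {P} (le les : P -> P -> Prop) (C : node P -> Prop) : Prop :=
  (forall n a q, C a -> An le les n a -> strict le (pr1 a) q ->
     C (Node (S n) q (Some a) 0)) /\
  (forall b, C b -> ~ An le les 0 b ->
     match pr2 b with Some a => C a | None => False end).

(* Extend g level by level: on A_m use g, and above level m send
   <n, q, a, k> to <n, q, pi(a), k>.  Since the extension preserves pr1, the
   image node satisfies the same admissibility condition as the original, so
   the map permutes each A_n and obeys the defining condition of G_n.  A closed
   set is closed under pr2 (the only half of closedness that is needed), so by
   induction on the level every element of C above level m is rebuilt from
   fixed points and is therefore fixed. *)

From Stdlib Require Import Lia Arith.

Lemma perm_on_ext {T} (S : T -> Prop) (f h : T -> T) :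
  (forall x, S x -> f x = h x) -> perm_on S f -> perm_on S h.
Proof.
  intros E (Hmaps & Hinj & Hsurj); split; [|split].
  - intros x Hx; rewrite <- E; auto.
  - intros x y Hx Hy Hxy; apply Hinj; auto; rewrite !E; auto.
  - intros y Hy; destruct (Hsurj y Hy) as (x & Hx & <-).
    exists x; split; auto; symmetry; auto.
Qed.

Lemma perm_on_increasing_union {T} (S : nat -> T -> Prop) (f : T -> T) :
  (forall n k x, n <= k -> S n x -> S k x) ->
  (forall n, perm_on (S n) f) ->
  perm_on (fun x => exists n, S n x) f.
Proof.
  intros Hmono Hperm; split; [|split].
  - intros x (n & Hx); exists n; apply (Hperm n); auto.
  - intros x y (n1 & Hx) (n2 & Hy) E.
    apply (Hperm (n1 + n2)); auto; [apply (Hmono n1) | apply (Hmono n2)]; auto; lia.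
  - intros y (n & Hy); destruct (proj2 (proj2 (Hperm n)) y Hy) as (x & Hx & E).
    exists x; split; auto; exists n; auto.
Qed.

Section Levels.

Variables (P : Type) (le les : P -> P -> Prop).

Definition admissible_child (a : node P) (q : P) (k : nat) : Prop :=
  (strict le (pr1 a) q /\ k = 0) \/ (~ le (pr1 a) q /\ les (pr1 a) q).

Lemma admissible_child_pr1 a a' q k :
  pr1 a' = pr1 a -> admissible_child a q k -> admissible_child a' q k.
Proof. unfold admissible_child; intros ->; auto. Qed.

Lemma An_level n x : An le les n x -> pr0 x <= n.
Proof.
  revert x; induction n as [|n IH]; intros x H; simpl in H.
  - destruct H as (p & k & ->); simpl; lia.
  - destruct H as [H | [(q & a & _ & _ & ->) | (q & a & k & _ & _ & _ & ->)]];
      simpl; try lia.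
    apply IH in H; lia.
Qed.

Lemma An_mono n k x : n <= k -> An le les n x -> An le les k x.
Proof. intros Hk H; induction Hk; [exact H | simpl; left; exact IHHk]. Qed.

Lemma An_child n q a k :
  An le les n a -> admissible_child a q k ->
  An le les (S n) (Node (S n) q (Some a) k).
Proof.
  intros Ha [[Hs ->] | [Hnle Hles]]; simpl; right.
  - left; exists q, a; auto.
  - right; exists q, a, k; auto.
Qed.

Lemma An_S_inv n x :
  An le les (S n) x ->
  An le les n x \/
  exists q a k, x = Node (S n) q (Some a) k /\ An le les n a /\ admissible_child a q k.
Proof.
  simpl; intros [H | [(q & a & Ha & Hs & ->) | (q & a & k & Ha & Hnle & Hles & ->)]].
  - left; exact H.
  - right; exists q, a, 0; unfold admissible_child; auto.
  - right; exists q, a, k; unfold admissible_child; auto.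
Qed.

Lemma An_inv n x :
  An le les n x ->
  (exists p k, x = Node 0 p None k) \/
  (exists n' q a k, x = Node (S n') q (Some a) k /\ An le les n' a /\
     admissible_child a q k /\ S n' <= n).
Proof.
  revert x; induction n as [|n IH]; intros x H; [left; exact H|].
  destruct (An_S_inv n x H) as [H' | (q & a & k & -> & Ha & Hc)].
  - destruct (IH x H') as [H0 | (n' & q & a & k & -> & Ha & Hc & Hl)]; [left; exact H0|].
    right; exists n', q, a, k; repeat split; auto; lia.
  - right; exists n, q, a, k; auto.
Qed.

Lemma An_at_level n x : An le les n x -> An le les (pr0 x) x.
Proof.
  intros H; destruct (An_inv n x H) as [(p & k & ->) | (n' & q & a & k & -> & Ha & Hc & _)].
  - exists p, k; reflexivity.
  - apply An_child; auto.
Qed.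

Lemma Gn_perm_on n f : Gn le les n f -> perm_on (An le les n) f.
Proof. destruct n; simpl; tauto. Qed.

Lemma Gn_antimono n k f : n <= k -> Gn le les k f -> Gn le les n f.
Proof. intros Hk; induction Hk; auto; intros (_ & H & _); auto. Qed.

Lemma Gn_pr1 n f a : Gn le les n f -> An le les n a -> pr1 (f a) = pr1 a.
Proof.
  revert a; induction n as [|n IH]; intros a G Ha.
  - destruct G as (_ & G); auto.
  - destruct G as (_ & Gn' & Gnew).
    destruct (An_S_inv n a Ha) as [H | (q & b & k & -> & _ & _)]; [auto|].
    apply Gnew; auto; intros Hn; apply An_level in Hn; simpl in Hn; lia.
Qed.

Lemma Gn_ext n f h :
  (forall x, An le les n x -> f x = h x) -> Gn le les n f -> Gn le les n h.
Proof.
  revert f h; induction n as [|n IH]; intros f h E G.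
  - destruct G as (Gperm & Gpr1); split; [eapply perm_on_ext; eauto|].
    intros a Ha; rewrite <- E; auto.
  - destruct G as (Gperm & Gn' & Gnew); split; [eapply perm_on_ext; eauto|split].
    + apply (IH f); auto; intros x Hx; apply E; simpl; left; auto.
    + intros b Hb Hn; rewrite <- E by auto.
      destruct (Gnew b Hb Hn) as (Hpr1 & Hpr2); split; auto; rewrite Hpr2.
      destruct (An_inv _ b Hb) as [(p & k & ->) | (n' & q & a & k & -> & Ha & _ & Hl)];
        simpl; auto.
      f_equal; apply E; simpl; left; apply (An_mono n'); auto; lia.
Qed.

Lemma Gn_S n f :
  Gn le les n f ->
  (forall q a k, An le les n a ->
     f (Node (S n) q (Some a) k) = Node (S n) q (Some (f a)) k) ->
  Gn le les (S n) f.
Proof.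
  intros G Hnew; destruct (Gn_perm_on n f G) as (Hmaps & Hinj & Hsurj).
  assert (Hadm : forall a q k, An le les n a ->
            admissible_child a q k -> admissible_child (f a) q k).
  { intros a q k Ha; apply admissible_child_pr1, (Gn_pr1 n); auto. }
  split; [split; [|split] | split; [exact G|]].
  - intros x Hx; destruct (An_S_inv n x Hx) as [H | (q & a & k & -> & Ha & Hc)].
    + simpl; left; auto.
    + rewrite Hnew by auto; apply An_child; auto.
  - intros x y Hx Hy Hxy.
    destruct (An_S_inv n x Hx) as [H | (q & a & k & -> & Ha & _)];
    destruct (An_S_inv n y Hy) as [H' | (q' & a' & k' & -> & Ha' & _)].
    + auto.
    + rewrite Hnew in Hxy by auto; apply Hmaps, An_level in H.
      rewrite Hxy in H; simpl in H; lia.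
    + rewrite Hnew in Hxy by auto; apply Hmaps, An_level in H'.
      rewrite <- Hxy in H'; simpl in H'; lia.
    + rewrite !Hnew in Hxy by auto; injection Hxy as -> Himg ->.
      rewrite (Hinj a a'); auto.
  - intros y Hy; destruct (An_S_inv n y Hy) as [H | (q & a & k & -> & Ha & Hc)].
    + destruct (Hsurj y H) as (x & Hx & E); exists x; split; auto; simpl; left; auto.
    + destruct (Hsurj a Ha) as (x & Hx & <-).
      exists (Node (S n) q (Some x) k); split; [|apply Hnew; auto].
      apply An_child; auto.
      apply admissible_child_pr1 with (f x); auto; symmetry; apply (Gn_pr1 n); auto.
  - intros b Hb Hn; destruct (An_S_inv n b Hb) as [H | (q & a & k & -> & Ha & _)];
      [tauto|].
    rewrite Hnew by auto; simpl; auto.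
Qed.

End Levels.

Fixpoint extend {P} (m : nat) (g : node P -> node P) (x : node P) : node P :=
  match x with
  | Node n p o k => if n <=? m then g x else Node n p (option_map (extend m g) o) k
  end.

Lemma extend_low {P} m (g : node P -> node P) x : pr0 x <= m -> extend m g x = g x.
Proof.
  destruct x as [n p o k]; simpl; intros Hx.
  apply Nat.leb_le in Hx; rewrite Hx; reflexivity.
Qed.

Lemma extend_high {P} m (g : node P -> node P) n q a k :
  m < n -> extend m g (Node n q (Some a) k) = Node n q (Some (extend m g a)) k.
Proof. intros Hn; simpl; destruct (Nat.leb_spec n m); [lia | reflexivity]. Qed.

Lemma Gn_extend {P} (le les : P -> P -> Prop) m g n :
  Gn le les m g -> Gn le les n (extend m g).
Proof.
  intros Hg.
  assert (Hlow : forall n, n <= m -> Gn le les n (extend m g)).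
  { intros n' Hn'; apply (Gn_ext P le les n' g); [|exact (Gn_antimono P le les n' m g Hn' Hg)].
    intros x Hx; symmetry; apply extend_low; apply An_level in Hx; lia. }
  induction n as [|n IH]; [apply Hlow; lia|].
  destruct (le_lt_dec (S n) m) as [Hn | Hn]; [apply Hlow; auto|].
  apply Gn_S; auto; intros; apply extend_high; auto.
Qed.

Lemma Gall_extend {P} (le les : P -> P -> Prop) m g :
  Gn le les m g -> Gall le les (extend m g).
Proof.
  intros Hg; split; [|intros n; apply Gn_extend; auto].
  apply perm_on_increasing_union; [apply An_mono|].
  intros n; apply Gn_perm_on, Gn_extend; auto.
Qed.

Lemma extend_fixes_closed {P} (le les : P -> P -> Prop) (C : node P -> Prop) m g :
  (forall x, C x -> Aall le les x) ->
  closed_set le les C ->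
  (forall x, C x -> An le les m x -> g x = x) ->
  forall x, C x -> extend m g x = x.
Proof.
  intros HCA (_ & Hpr2) Hfix.
  assert (K : forall d x, pr0 x <= d -> C x -> extend m g x = x).
  { induction d as [|d IH]; intros x Hd Cx; destruct (HCA x Cx) as (n & Hn);
      (destruct (le_lt_dec (pr0 x) m) as [Hlow | Hhigh];
       [ rewrite extend_low by auto;
         apply Hfix; auto; exact (An_mono _ _ _ _ _ _ Hlow (An_at_level _ _ _ _ _ Hn)) |]);
      destruct (An_inv _ _ _ _ _ Hn) as [(p & k & ->) | (n' & q & a & k & -> & Ha & _ & _)];
      simpl in Hhigh, Hd; try lia.
    rewrite extend_high by auto.
    assert (Ca : C a) by (apply (Hpr2 _ Cx); intros (? & ? & E); discriminate E).
    rewrite (IH a); auto; apply An_level in Ha; lia. }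
  intros x Cx; apply (K (pr0 x)); auto.
Qed.

Theorem lemma2p3 (P : Type) (le les : P -> P -> Prop)
  (le_refl : forall p, le p p)
  (le_antisym : forall p q, le p q -> le q p -> p = q)
  (le_trans : forall p q r, le p q -> le q r -> le p r)
  (les_refl : forall p, les p p)
  (les_trans : forall p q r, les p q -> les q r -> les p r)
  (le_les : forall p q, le p q -> les p q)
  (C : node P -> Prop)
  (HCA : forall x, C x -> Aall le les x)
  (HC : closed_set le les C)
  (m : nat) (g : node P -> node P)
  (Hg : Gn le les m g)
  (Hfix : forall x, C x -> An le les m x -> g x = x) :
  exists pi : node P -> node P,
    Gall le les pi /\
    (forall x, An le les m x -> pi x = g x) /\
    (forall x, C x -> pi x = x).
Proof.
  exists (extend m g); split; [|split].
  - apply Gall_extend; exact Hg.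
  - intros x Hx; exact (extend_low m g x (An_level P le les m x Hx)).
  - apply (extend_fixes_closed le les); assumption.
Qed.
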